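(* Let $G$ be a connected graph of girth at least $6$ that has exactly two vertices $x,y$ of type $2$ and no vertex of type $k$ for any $k\geq 3$. Then $G$ is almost well-covered if and only if $x$ and $y$ are adjacent and one of the following two conditions holds: (1) $V(G_0)=\emptyset$; (2) $G_0\cong K_2$, neither $x$ nor $y$ has a neighbor in $G_0$, and the two vertices of $G_0$ both have degree $2$ in $G$ and are contained in an induced $6$-cycle of $G$ that contains $x$ and $y$.
   Context: All graphs are finite and simple. The girth of a graph is the length of a shortest cycle (infinite for acyclic graphs). For a graph $G$, $\alpha(G)$ is the maximum size of an independent set and $i(G)$ is the minimum size of an inclusion-maximal independent set. $G$ is almost well-covered if $\alpha(G)-i(G)=1$. Types of vertices: let $U$ be the set of vertices of $G$ whose connected component in $G$ is a complete graph. In $G-U$, vertices of degree $1$ are called leaves and the other vertices are called internal vertices. An internal vertex adjacent to exactly $k$ leaves is said to be of type $k$; in addition, every vertex of $U$ is of type $0$ (leaves of $G-U$ have no type). $G_i$ denotes the subgraph of $G$ induced by all vertices of type $i$. *)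

From mathcomp Require Import all_boot.
Set Implicit Arguments. Unset Strict Implicit. Unset Printing Implicit Defensive.

Section Graphs.
Variables (T : finType) (e : rel T).

Definition simple_graph : Prop := symmetric e /\ irreflexive e.

Definition connected_graph : Prop := forall u v : T, connect e u v.

Definition is_cycle (s : seq T) : bool := [&& uniq s, cycle e s & 3 <= size s].

Definition girth_at_least (g : nat) : Prop :=
  forall s : seq T, is_cycle s -> g <= size s.

(* induced cycle: a cycle whose only edges among its vertices are cycle edges *)
Definition induced_cycle (s : seq T) : Prop :=
  is_cycle s /\
  forall u w, u \in s -> w \in s -> e u w ->
    (index w s == (index u s).+1 %% size s) || (index u s == (index w s).+1 %% size s).

Definition deg (v : T) : nat := #|[set u | e v u]|.

Definition independent (S : {set T}) : bool :=
  [forall u in S, forall w in S, ~~ e u w].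

Definition maximal_independent (S : {set T}) : bool := maxset independent S.

Definition alpha : nat := \max_(S : {set T} | independent S) #|S|.

(* minimum size of a maximal independent set (the default #|T| is never
   smaller than the true minimum, and maximal independent sets always exist) *)
Definition indep_dom : nat :=
  \big[minn/#|T|]_(S : {set T} | maximal_independent S) #|S|.

Definition almost_well_covered : Prop := alpha - indep_dom = 1.

Definition complete_on (A : {set T}) : bool :=
  [forall u in A, forall w in A, (u != w) ==> e u w].

Definition Uset : {set T} := [set v | complete_on [set u | connect e v u]].

Definition degGU (v : T) : nat := #|[set u | e v u & u \notin Uset]|.

Definition leaf (v : T) : bool := (v \notin Uset) && (degGU v == 1).

Definition internal (v : T) : bool := (v \notin Uset) && ~~ leaf v.

Definition has_type (v : T) (k : nat) : bool :=
  ((v \in Uset) && (k == 0)) ||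
  (internal v && (#|[set u | e v u & leaf u]| == k)).

Definition G_ (k : nat) : {set T} := [set v | has_type v k].

End Graphs.

(* Since x is internal and G is connected, no component of G is complete: every
   vertex is a leaf or an internal vertex of type 0, 1 or 2, and every leaf hangs on
   exactly one internal vertex.  Counting an independent set internal vertex by
   internal vertex (r with its leaves contributes at most 1 if r is in the set and at
   most the type of r otherwise, with equality for maximal sets) shows that an
   independent set S2 exceeds a maximal set S1 by at most the number of type-0 vertices
   of S2 plus the number of type-2 vertices of S1 minus the number of type-0 vertices
   of S1, while trading x for its two leaves always gains one vertex.  So G is almost
   well-covered iff no independent set beats a maximal one by two.
   If x ~ y and G_0 is empty or an edge ab on an induced 6-cycle through x and y, the
   excess is at most one, because a maximal set containing x or y meets {a, b}.
   Conversely, trading an independent set Q of internal vertices of positive type for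
   their leaves, and adding type-0 vertices dominated by Q, gains one vertex per type-2
   vertex of Q and per added vertex.  Under girth 6 this forces x ~ y, separates G_0
   from {x, y}, gives every type-0 vertex a type-1 neighbour, and pins down a 6-cycle
   through an edge ab of G_0, which must then be all of G_0. *)

From mathcomp Require Import all_boot.
Set Implicit Arguments. Unset Strict Implicit. Unset Printing Implicit Defensive.

Section SimpleGraph.
Variables (T : finType) (e : rel T).
Hypothesis e_simple : simple_graph e.

Lemma edge_sym u v : e u v = e v u.
Proof. by case: e_simple => e_sym _; apply: e_sym. Qed.

Lemma edge_swap u v : e u v -> e v u.
Proof. by rewrite edge_sym. Qed.

Lemma edge_irrefl u : e u u = false.
Proof. by case: e_simple => _ e_irr; apply: e_irr. Qed.

Lemma edge_neq u v : e u v -> u != v.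
Proof. by apply: contraTneq => ->; rewrite edge_irrefl. Qed.

Lemma deg1_nbr_uniq l a b : deg e l = 1 -> e l a -> e l b -> a = b.
Proof.
move=> /eqP/cards1P[r Nl] la lb.
have: a \in [set u | e l u] /\ b \in [set u | e l u] by rewrite !inE.
by rewrite Nl !inE => -[/eqP -> /eqP ->].
Qed.

Lemma deg_neq1_other_nbr w v : deg e w != 1 -> e w v -> exists2 p, e w p & p != v.
Proof.
move=> dw wv; have /subsetPn[p] : ~~ ([set u | e w u] \subset [set v]).
  apply: contra dw => sub; rewrite /deg (_ : [set u | e w u] = [set v]) ?cards1 //.
  by apply/eqP; rewrite eqEsubset sub sub1set inE.
by rewrite !inE => wp pv; exists p.
Qed.

Lemma deg2_nbrs a p q : p != q -> e a p -> e a q -> deg e a = 2 ->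
  forall z, e a z -> z = p \/ z = q.
Proof.
move=> pq ap aq da z az.
have Na : [set p; q] = [set u | e a u].
  apply/eqP; rewrite eqEcard cards2 pq /= -/(deg e a) da leqnn andbT.
  by apply/subsetP => u; rewrite !inE => /orP[] /eqP ->.
have: z \in [set u | e a u] by rewrite inE.
by rewrite -Na !inE => /orP[] /eqP; auto.
Qed.

Lemma deg_eq2 a p q : p != q -> e a p -> e a q ->
  (forall z, e a z -> z = p \/ z = q) -> deg e a = 2.
Proof.
move=> pq ap aq Na; rewrite /deg (_ : [set u | e a u] = [set p; q]) ?cards2 ?pq //.
by apply/setP => z; rewrite !inE; apply/idP/orP => [/Na[] ->|[] /eqP ->]; auto.
Qed.

(** * Independent sets *)

Lemma independentP (S : {set T}) :
  reflect (forall u w, u \in S -> w \in S -> ~~ e u w) (independent e S).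
Proof.
apply: (iffP forall_inP) => [iS u w uS wS|iS u uS].
  by move/forall_inP: (iS u uS); apply.
by apply/forall_inP => w; apply: iS.
Qed.

Lemma independentS (A B : {set T}) : A \subset B -> independent e B -> independent e A.
Proof.
move=> AB /independentP iB; apply/independentP => u w uA wA.
by apply: iB; apply: (subsetP AB).
Qed.

Lemma independent0 : independent e set0.
Proof. by apply/independentP => u w; rewrite inE. Qed.

Lemma maximal_independentW S : maximal_independent e S -> independent e S.
Proof. exact: maxsetp. Qed.

Lemma maximal_independent_dom S v :
  maximal_independent e S -> v \notin S -> exists2 u, u \in S & e u v.
Proof.
case/maxsetP=> /independentP iS maxS vS.
have [/exists_inP[u uS uv]|/exists_inPn noNv] := boolP [exists u in S, e u v].
  by exists u.
suff /maxS/(_ (subsetUr _ _))/setP/(_ v) : independent e (v |: S).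
  by rewrite setU11 (negbTE vS).
apply/independentP => a b; rewrite !inE => /predU1P[-> | aS] /predU1P[-> | bS].
- by rewrite edge_irrefl.
- by rewrite edge_sym noNv.
- exact: noNv.
- exact: iS.
Qed.

Lemma independent_maximal_ext B :
  independent e B -> exists2 S, maximal_independent e S & B \subset S.
Proof. by case/maxset_exists=> S; exists S. Qed.

Lemma card_le_alpha S : independent e S -> #|S| <= alpha e.
Proof. exact: (@leq_bigmax_cond _ (independent e) (fun S : {set T} => #|S|)). Qed.

Lemma indep_dom_le S : maximal_independent e S -> indep_dom e <= #|S|.
Proof.
move=> maxS; rewrite /indep_dom -big_filter.
have: S \in [seq S <- index_enum _ | maximal_independent e S].
  by rewrite mem_filter maxS mem_index_enum.
elim: (filter _ _) => //= S' r IH; rewrite inE big_cons => /predU1P[<-|/IH].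
  exact: geq_minl.
exact/leq_trans/geq_minr.
Qed.

Lemma indep_dom_attained :
  exists2 S, maximal_independent e S & #|S| <= indep_dom e.
Proof.
have [S0 maxS0 _] := independent_maximal_ext independent0.
rewrite /indep_dom.
apply: (big_ind (fun k => exists2 S, maximal_independent e S & #|S| <= k)).
- by exists S0 => //; apply: max_card.
- move=> a b [Sa ? Sa_le] [Sb ? Sb_le].
  by case: (leqP a b) => ab; [exists Sa|exists Sb; rewrite ?(ltnW ab)].
- by move=> S maxS; exists S.
Qed.

Lemma awc_card_le S1 S2 : almost_well_covered e ->
  maximal_independent e S1 -> independent e S2 -> #|S2| <= #|S1|.+1.
Proof.
rewrite /almost_well_covered => awc maxS1 iS2.
have: alpha e <= (indep_dom e).+1 by rewrite -addn1 -leq_subLR awc.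
move/(leq_trans (card_le_alpha iS2)) => /leq_trans; apply.
by rewrite ltnS indep_dom_le.
Qed.

Lemma awc_of_card_le S1 S2 :
  maximal_independent e S1 -> independent e S2 -> #|S1| < #|S2| ->
  (forall S1 S2, maximal_independent e S1 -> independent e S2 -> #|S2| <= #|S1|.+1) ->
  almost_well_covered e.
Proof.
move=> maxS1 iS2 gap card_le.
have [Smin maxSmin Smin_le] := indep_dom_attained.
have alpha_le : alpha e <= (indep_dom e).+1.
  apply/bigmax_leqP => S iS; exact: leq_trans (card_le _ _ maxSmin iS) _.
have alpha_ge : (indep_dom e).+1 <= alpha e.
  exact: leq_ltn_trans (indep_dom_le maxS1) (leq_trans gap (card_le_alpha iS2)).
by rewrite /almost_well_covered (@anti_leq (alpha e) (indep_dom e).+1) ?alpha_le ?subSnn.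
Qed.

Lemma card_edge_independent S u w : e u w -> independent e S -> #|[set u; w] :&: S| <= 1.
Proof.
move=> uw /independentP iS; rewrite leqNgt; apply/negP.
case/card_gt1P=> [a [b [/setIP[aE aS] /setIP[bE bS] ab]]].
move: aE bE ab (iS _ _ aS bS); rewrite !inE.
by case/orP=> /eqP-> /orP[] /eqP->; rewrite ?eqxx ?uw // edge_sym uw.
Qed.

(** * Girth six *)

Section Girth6.
Hypothesis girth6 : girth_at_least e 6.

Lemma no_triangle a b c : e a b -> e b c -> e c a -> False.
Proof.
move=> ab bc ca; have := girth6 (s := [:: a; b; c]).
rewrite /is_cycle /= !inE !negb_or ab bc ca (edge_neq ab) (edge_neq bc).
by rewrite (eq_sym a c) (edge_neq ca); move/(_ isT).
Qed.

Lemma no_square a b c d : e a b -> e b c -> e c d -> e d a -> a != c -> b != d -> False.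
Proof.
move=> ab bc cd da ac bd; have := girth6 (s := [:: a; b; c; d]).
rewrite /is_cycle /= !inE !negb_or ab bc cd da ac bd (edge_neq ab) (edge_neq bc).
by rewrite (edge_neq cd) (eq_sym a d) (edge_neq da); move/(_ isT).
Qed.

Lemma no_pentagon a b c d f : e a b -> e b c -> e c d -> e d f -> e f a ->
  a != c -> b != d -> c != f -> d != a -> f != b -> False.
Proof.
move=> ab bc cd df fa ac bd cf da fb; have := girth6 (s := [:: a; b; c; d; f]).
rewrite /is_cycle /= !inE !negb_or ab bc cd df fa ac bd cf (edge_neq ab).
rewrite (edge_neq bc) (edge_neq cd) (edge_neq df) (eq_sym a d) da (eq_sym a f).
by rewrite (edge_neq fa) (eq_sym b f) fb; move/(_ isT).
Qed.

Definition near (B : {set T}) v a :=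
  (e v a && (a \notin B)) || [exists w in B, [&& e v w, e w a & a != v]].

Lemma near_nadj B v a b : near B v a -> near B v b -> ~~ e a b.
Proof.
have nB w c : w \in B -> c \notin B -> c != w by move=> wB; apply: contraNneq => ->.
wlog [va aB] : a b / e v a /\ a \notin B.
  move=> near1 na nb; case/orP: (na) => [/andP[va aB]|/exists_inP[w wB /and3P[vw wa av]]].
    exact: near1.
  case/orP: (nb) => [/andP[vb bB]|/exists_inP[w' w'B /and3P[vw' w'b bv]]].
    by rewrite edge_sym; apply: near1.
  apply/negP => ab; have [eq_ww'|ww'] := eqVneq w w'.
    by subst w'; apply: (no_triangle ab _ wa); rewrite edge_sym.
  have aw' : a != w'.
    by apply/eqP => eq_aw'; subst w'; apply: (no_triangle vw wa); rewrite edge_sym.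
  have wb : w != b.
    by apply/eqP => eq_wb; subst b; apply: (no_triangle vw' w'b); rewrite edge_sym.
  by apply: (no_pentagon ab _ _ vw wa aw' bv); rewrite 1?edge_sym // eq_sym.
move=> _ /orP[/andP[vb bB]|/exists_inP[w' w'B /and3P[vw' w'b bv]]]; apply/negP => ab.
  by apply: (no_triangle ab _ va); rewrite edge_sym.
by apply: (no_square ab _ _ va (nB _ _ w'B aB) bv); rewrite edge_sym.
Qed.

Lemma cycle6_induced v0 v1 v2 v3 v4 v5 :
  uniq [:: v0; v1; v2; v3; v4; v5] ->
  e v0 v1 -> e v1 v2 -> e v2 v3 -> e v3 v4 -> e v4 v5 -> e v5 v0 ->
  induced_cycle e [:: v0; v1; v2; v3; v4; v5].
Proof.
move=> uniq_s e01 e12 e23 e34 e45 e50.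
split; first by rewrite /is_cycle uniq_s /= e01 e12 e23 e34 e45 e50.
have e10 : e v1 v0 by rewrite edge_sym.
have e21 : e v2 v1 by rewrite edge_sym.
have e32 : e v3 v2 by rewrite edge_sym.
have e43 : e v4 v3 by rewrite edge_sym.
have e54 : e v5 v4 by rewrite edge_sym.
have e05 : e v0 v5 by rewrite edge_sym.
move=> u w /(nthP v0)[i lti <-] /(nthP v0)[j ltj <-].
rewrite (index_uniq v0 ltj uniq_s) (index_uniq v0 lti uniq_s).
case: i lti => [|[|[|[|[|[|//]]]]]] _; case: j ltj => [|[|[|[|[|[|//]]]]]] _ //= chord.
(* A chord of a 6-cycle closes a triangle or a 4-cycle. *)
all: exfalso; first [by rewrite edge_irrefl in chord | match goal with
  | H1 : is_true (e ?a ?b), H2 : is_true (e ?b ?c), H3 : is_true (e ?c ?a) |- _ =>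
      exact: no_triangle H1 H2 H3
  | H1 : is_true (e ?a ?b), H2 : is_true (e ?b ?c), H3 : is_true (e ?c ?d),
    H4 : is_true (e ?d ?a) |- _ =>
      apply: (no_square H1 H2 H3 H4);
      by apply: contraTneq uniq_s => ->; rewrite /= !inE !eqxx ?orbT ?andbF
  end].
Qed.

Lemma cycle6_deg2_edge s a b c d v :
  is_cycle e s -> size s = 6 -> a \in s -> b \in s -> v \in s ->
  e a b -> deg e a = 2 -> deg e b = 2 ->
  e a c -> c != b -> e b d -> d != a ->
  v != a -> v != b -> ~~ e v a -> ~~ e v b -> e v c || e v d.
Proof.
case/and3P=> uniq_s cycle_s _ size_s aS bS vS ab da db ac cb bd dan va vb nva nvb.
have [i s' def_s] := rot_to aS.
have mem_s' z : z \in s -> z \in a :: s' by rewrite -def_s mem_rot.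
have := size_rot i s; rewrite -(rot_uniq i) -(rot_cycle i) def_s size_s in uniq_s cycle_s *.
move: (mem_s' _ bS) (mem_s' _ vS) uniq_s cycle_s; clear def_s mem_s'.
case: s' => [|s1 [|s2 [|s3 [|s4 [|s5 [|]]]]]] //=.
rewrite !inE (negbTE va) /= => b_in v_in.
case/and5P=> /norP[_ /norP[a2 /norP[_ /norP[a4 _]]]] /norP[_ /norP[_ /norP[_ n15]]] _ _ _.
case/and5P=> as1 e12 e23 e34 /and3P[e45 e5a _] _.
have Na := deg2_nbrs n15 as1 (edge_swap e5a) da.
have [eq_b|eq_b] := Na _ ab; subst b.
  have [eq_c|->] := Na _ ac; first by rewrite eq_c eqxx in cb.
  have [eq_d|->] := deg2_nbrs a2 (edge_swap as1) e12 db bd.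
    by rewrite eq_d eqxx in dan.
  move: v_in nva nvb; rewrite (negbTE vb) /=.
  case/or4P=> /eqP->; rewrite ?e5a ?e45 ?(edge_sym s3 s2) ?(edge_sym s2 s1) ?e23 ?e12 ?orbT //.
have [->|eq_c] := Na _ ac; last by rewrite eq_c eqxx in cb.
have [eq_d|->] := deg2_nbrs a4 e5a (edge_swap e45) db bd.
  by rewrite eq_d eqxx in dan.
move: v_in nva nvb; rewrite (negbTE vb) orbF /=.
by case/or4P=> /eqP->; rewrite ?e34 ?e45 ?(edge_sym s1 a) ?(edge_sym s2 s1) ?as1 ?e12 ?orbT.
Qed.

Lemma maximal_cycle6_deg2_edge S s a b v :
  maximal_independent e S -> is_cycle e s -> size s = 6 ->
  a \in s -> b \in s -> v \in s -> e a b -> deg e a = 2 -> deg e b = 2 ->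
  v \in S -> v != a -> v != b -> ~~ e v a -> ~~ e v b -> (a \in S) || (b \in S).
Proof.
move=> maxS cyc size_s aS bS vS ab da db vS' va vb nva nvb.
apply: contraT => /norP[aS' bS'].
have /independentP iS := maximal_independentW maxS.
have [c cS ca] := maximal_independent_dom maxS aS'.
have [d dS db'] := maximal_independent_dom maxS bS'.
have cb : c != b by apply: contraNneq bS' => <-.
have dan : d != a by apply: contraNneq aS' => <-.
rewrite edge_sym in ca; rewrite edge_sym in db'.
case/orP: (cycle6_deg2_edge cyc size_s aS bS vS ab da db ca cb db' dan va vb nva nvb) => vcd.
  by move: (iS _ _ vS' cS); rewrite vcd.
by move: (iS _ _ vS' dS); rewrite vcd.
Qed.

(** * Vertex types *)

Section TypedVertices.
Variables x y : T.
Hypotheses (e_connected : connected_graph e) (x_neq_y : x != y)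
  (x_type2 : has_type e x 2) (y_type2 : has_type e y 2)
  (type2_xy : forall v, has_type e v 2 -> v = x \/ v = y)
  (no_type3 : forall v k, 3 <= k -> ~~ has_type e v k).

Definition leaves_at v := [set u | e v u & leaf e u].

Lemma in_leaves_at r l : (l \in leaves_at r) = e r l && leaf e l.
Proof. by rewrite in_set. Qed.

Lemma in_G v k : (v \in G_ e k) = has_type e v k.
Proof. by rewrite inE. Qed.

Definition type0_shape : Prop :=
  G_ e 0 = set0 \/
  exists a b : T,
    [/\ a != b /\ e a b, G_ e 0 = [set a; b],
        [/\ ~~ e x a, ~~ e x b, ~~ e y a & ~~ e y b],
        (deg e a = 2 /\ deg e b = 2) &
        exists s : seq T,
          [/\ size s = 6, induced_cycle e s &
              [/\ a \in s, b \in s, x \in s & y \in s]]].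

Lemma Uset0 : Uset e = set0.
Proof.
have xU : x \notin Uset e by move: x_type2; rewrite /has_type andbF => /andP[/andP[]].
apply/setP => v; rewrite in_set0; apply/negbTE; apply: contra xU; rewrite !inE.
suff -> : [set u | connect e v u] = [set u | connect e x u] by [].
by apply/setP => u; rewrite !inE !e_connected.
Qed.

Lemma leafE v : leaf e v = (deg e v == 1).
Proof.
rewrite /leaf /degGU /deg Uset0 in_set0 /=.
by congr (_ == 1); apply: eq_card => u; rewrite !inE andbT.
Qed.

Lemma has_typeE v k : has_type e v k = ~~ leaf e v && (#|leaves_at v| == k).
Proof. by rewrite /has_type /internal Uset0 in_set0. Qed.

Lemma has_type_internal v k : has_type e v k -> ~~ leaf e v.
Proof. by rewrite has_typeE => /andP[]. Qed.

Lemma card_leaves_at v k : has_type e v k -> #|leaves_at v| = k.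
Proof. by rewrite has_typeE => /andP[_ /eqP]. Qed.

Lemma has_type_uniq v i j : has_type e v i -> has_type e v j -> i = j.
Proof. by move=> /card_leaves_at <- /card_leaves_at. Qed.

Lemma has_type_pos v k : has_type e v k -> 0 < k -> ~~ leaf e v /\ ~~ has_type e v 0.
Proof.
move=> vk k_gt0; split; first exact: has_type_internal vk.
by apply/negP => /(has_type_uniq vk) k0; rewrite k0 in k_gt0.
Qed.

Lemma has_type_neq u v i j : has_type e u i -> has_type e v j -> i != j -> u != v.
Proof.
move=> /card_leaves_at Lu /card_leaves_at Lv; apply: contraNneq => eq_uv.
by rewrite -Lu -Lv eq_uv.
Qed.

Lemma type_cases v :
  [\/ leaf e v, has_type e v 0, has_type e v 1 | has_type e v 2].
Proof.
have [lv|iv] := boolP (leaf e v); first exact: Or41.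
have := @no_type3 v #|leaves_at v|; rewrite !has_typeE iv eqxx /=.
case: #|leaves_at v| => [|[|[|k]]] type3; [exact: Or42|exact: Or43|exact: Or44|].
by have := type3 isT.
Qed.

Lemma type2_cases s t : has_type e s 2 -> has_type e t 2 -> s != t ->
  forall v, has_type e v 2 -> v = s \/ v = t.
Proof.
move=> /type2_xy s_xy /type2_xy t_xy st v /type2_xy v_xy.
by case: s_xy t_xy v_xy st => -> [] -> [] ->; rewrite ?eqxx; auto.
Qed.

Lemma leaf_nbr_uniq l a b : leaf e l -> e l a -> e l b -> a = b.
Proof. by rewrite leafE => /eqP; apply: deg1_nbr_uniq. Qed.

Lemma leaf_nbr_internal l r : leaf e l -> e l r -> ~~ leaf e r.
Proof.
move=> ll lr; apply/negP => lr'.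
have Nl w : e l w -> w = r by move=> lw; apply: leaf_nbr_uniq ll lw lr.
have Nr w : e r w -> w = l.
  by move=> rw; apply: leaf_nbr_uniq lr' rw _; rewrite edge_sym.
have closed_lr : closed e (mem [set l; r]).
  move=> u w uw; rewrite !inE.
  have [eq_ul|ul] := eqVneq u l; first by subst u; rewrite (Nl _ uw) eqxx orbT.
  have [eq_ur|ur] := eqVneq u r; first by subst u; rewrite (Nr _ uw) eqxx.
  have wu : e w u by rewrite edge_sym.
  apply/esym/norP; split; apply/eqP => eq_w; subst w.
    by move: ur; rewrite (Nl _ wu) eqxx.
  by move: ul; rewrite (Nr _ wu) eqxx.
have := closed_connect closed_lr (e_connected l x).
rewrite !inE eqxx => /esym/orP[] /eqP eq_x; move: (has_type_internal x_type2).
  by rewrite eq_x ll.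
by rewrite eq_x lr'.
Qed.

Lemma type0_nbr_internal v u : has_type e v 0 -> e v u -> ~~ leaf e u.
Proof.
move/card_leaves_at/eqP; rewrite cards_eq0 => /eqP L0 vu.
by apply/negP => lu; have := in_set0 u; rewrite -L0 inE vu lu.
Qed.

Lemma internal_other_nbr w v : ~~ leaf e w -> e w v -> exists2 p, e w p & p != v.
Proof. by rewrite leafE; apply: deg_neq1_other_nbr. Qed.

Lemma internal_leaf_nbr r : ~~ leaf e r -> ~~ has_type e r 0 ->
  exists2 l, e r l & leaf e l.
Proof.
rewrite has_typeE => -> /=; rewrite -lt0n card_gt0 => /set0Pn[l].
by rewrite in_leaves_at => /andP[rl ll]; exists l.
Qed.

Lemma leaf_nbr l : leaf e l -> exists u, e l u.
Proof.
by rewrite leafE /deg => /cards1P[u Nl]; exists u; have := set11 u; rewrite -Nl inE.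
Qed.

(** * Counting independent sets by internal vertices *)

Definition owner v := if leaf e v then odflt v [pick u | e v u] else v.

Lemma owner_internal v : ~~ leaf e (owner v).
Proof.
rewrite /owner; case: ifP => [lv|/negbT //]; case: pickP => [u /= vu|none].
  exact: leaf_nbr_internal lv vu.
by have [u] := leaf_nbr lv; rewrite none.
Qed.

Lemma owner_eq v r : ~~ leaf e r -> (owner v == r) = (v == r) || (v \in leaves_at r).
Proof.
move=> ir; rewrite /owner inE; case: ifPn => lv; last by rewrite andbF orbF.
have -> /= : (v == r) = false by apply: contraNF ir => /eqP <-.
rewrite andbT edge_sym; case: pickP => [u /= vu|none].
  by apply/eqP/idP => [<- //|vr]; apply: leaf_nbr_uniq lv vu vr.
by have [u] := leaf_nbr lv; rewrite none.
Qed.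

Definition share (S : {set T}) r := (r \in S) + #|S :&: leaves_at r|.

Lemma card_sum_share (S : {set T}) : #|S| = \sum_(r | ~~ leaf e r) share S r.
Proof.
rewrite -sum1_card (partition_big owner (fun r => ~~ leaf e r)) //=; last first.
  by move=> v _; apply: owner_internal.
apply: eq_bigr => r ir; rewrite sum1dep_card /share.
have -> : [set v in S | owner v == r] = [set v in S | v == r] :|: (S :&: leaves_at r).
  by apply/setP => v; rewrite !inE owner_eq // inE andb_orr.
rewrite cardsU (_ : [set v in S | v == r] :&: _ = set0) ?cards0 ?subn0; last first.
  by apply/setP => v; rewrite !inE; case: (eqVneq v r) => [->|]; rewrite ?edge_irrefl ?andbF.
congr (_ + _); have [rS|rS] := boolP (r \in S).
  rewrite (_ : [set v in S | v == r] = [set r]) ?cards1 //.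
  by apply/setP => v; rewrite !inE andb_idl // => /eqP->.
rewrite (_ : [set v in S | v == r] = set0) ?cards0 //.
by apply/setP => v; rewrite !inE; case: (eqVneq v r) => [->|]; rewrite ?(negbTE rS) ?andbF.
Qed.

Lemma sum_internal_indicator (A : {set T}) : {in A, forall r, ~~ leaf e r} ->
  \sum_(r | ~~ leaf e r) (r \in A) = #|A|.
Proof.
move=> iA; rewrite -big_mkcondr sum1_card; apply: eq_card => r.
by rewrite unfold_in /= andb_idl //; apply: iA.
Qed.

Lemma maximal_leaves_at (S : {set T}) r :
  maximal_independent e S -> r \notin S -> leaves_at r \subset S.
Proof.
move=> maxS rS; apply/subsetP => l; rewrite in_leaves_at => /andP[rl ll].
apply: contraT => lS; have [u uS ul] := maximal_independent_dom maxS lS.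
by move: rS; rewrite -(leaf_nbr_uniq ll (edge_swap ul) (edge_swap rl)) uS.
Qed.

Lemma share_le (S : {set T}) r : independent e S ->
  share S r <= (if r \in S then 1 else #|leaves_at r|).
Proof.
move=> /independentP iS; rewrite /share; case: ifPn => rS; last first.
  by rewrite add0n subset_leq_card // subsetIr.
rewrite (_ : S :&: leaves_at r = set0) ?cards0 //.
apply/setP => l; rewrite in_setI in_leaves_at in_set0; apply/negbTE.
by apply/and3P => -[lS rl _]; move: (iS _ _ rS lS); rewrite rl.
Qed.

Lemma share_ge_leaves (S : {set T}) r :
  leaves_at r \subset S -> (r \in S) + #|leaves_at r| <= share S r.
Proof. by move=> LS; rewrite /share (setIidPr LS). Qed.

Lemma share_maximal (S : {set T}) r : maximal_independent e S ->
  share S r = (if r \in S then 1 else #|leaves_at r|).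
Proof.
move=> maxS; apply/eqP; rewrite eqn_leq share_le ?maximal_independentW //=.
case: ifPn => rS; first by rewrite /share rS.
by move: (share_ge_leaves (maximal_leaves_at maxS rS)); rewrite (negbTE rS).
Qed.

Lemma share_exchange_le (S1 S2 : {set T}) r :
  maximal_independent e S1 -> independent e S2 -> ~~ leaf e r ->
  share S2 r + (r \in G_ e 0 :&: S1)
    <= share S1 r + (r \in G_ e 0 :&: S2) + (r \in G_ e 2 :&: S1).
Proof.
move=> maxS1 iS2 ir; have := share_le r iS2.
rewrite (share_maximal r maxS1) !inE !has_typeE ir /=.
case: (type_cases r) => [lr|/card_leaves_at->|/card_leaves_at->|/card_leaves_at->].
  by rewrite lr in ir.
all: by case: (r \in S1); case: (r \in S2); case: (share S2 r) => [|[|[]]].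
Qed.

Lemma card_exchange_le S1 S2 :
  maximal_independent e S1 -> independent e S2 ->
  #|S2| + #|G_ e 0 :&: S1| <= #|S1| + #|G_ e 0 :&: S2| + #|G_ e 2 :&: S1|.
Proof.
move=> maxS1 iS2.
have typed_internal k (S : {set T}) : {in G_ e k :&: S, forall r, ~~ leaf e r}.
  by move=> r; rewrite inE in_G => /andP[/has_type_internal].
rewrite (card_sum_share S1) (card_sum_share S2).
rewrite -(sum_internal_indicator (typed_internal 0 S1)).
rewrite -(sum_internal_indicator (typed_internal 0 S2)).
rewrite -(sum_internal_indicator (typed_internal 2 S1)) -!big_split /=.
by apply: leq_sum => r; apply: share_exchange_le.
Qed.

Lemma type2_exchange s : has_type e s 2 ->
  exists S1 S2, [/\ maximal_independent e S1, independent e S2 & #|S1| < #|S2|].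
Proof.
move=> s_type2.
have [S1 maxS1 sS1] : exists2 S, maximal_independent e S & [set s] \subset S.
  apply: independent_maximal_ext; apply/independentP => u w.
  by rewrite !inE => /eqP-> /eqP->; rewrite edge_irrefl.
move: sS1; rewrite sub1set => sS1; have /independentP iS1 := maximal_independentW maxS1.
exists S1, ((S1 :\ s) :|: leaves_at s); split => //.
  apply/independentP => u w; rewrite !in_setU !in_setD1 !in_leaves_at.
  move=> /orP[/andP[us uS]|/andP[su lu]] /orP[/andP[ws wS]|/andP[sw lw]].
  - exact: iS1.
  - by apply: contra us => uw; rewrite (leaf_nbr_uniq lw (edge_swap uw) (edge_swap sw)).
  - by apply: contra ws => uw; rewrite (leaf_nbr_uniq lu uw (edge_swap su)).
  - by apply: contraL lw => uw; apply: leaf_nbr_internal lu uw.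
rewrite cardsU (_ : (S1 :\ s) :&: leaves_at s = set0) ?cards0 ?subn0.
  by rewrite (card_leaves_at s_type2) (cardsD1 s S1) sS1 addn2.
apply/setP => l; rewrite in_setI in_setD1 in_leaves_at in_set0.
apply/negbTE/negP => /and3P[/andP[_ lS1] sl _].
by move: (iS1 _ _ sS1 lS1); rewrite sl.
Qed.

(* Extend Q, Z and the leaves not adjacent to Q to a maximal independent set S1, then
   replace Q by its leaves and add V.  No neighbour of V survives in S1 outside Q:
   type-0 ones are dominated by Q or Z, the others keep a leaf in S1.  Each q in Q is
   worth its leaves, one more than q itself when q has type 2. *)
Section ExchangeWitness.
Variables Q Z V : {set T}.
Hypotheses (Q_typed : {in Q, forall q, ~~ leaf e q /\ ~~ has_type e q 0})
  (Q_indep : independent e Q)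
  (Z_type0 : {in Z, forall z, has_type e z 0}) (Z_indep : independent e Z)
  (QZ_nadj : {in Q & Z, forall q z, ~~ e q z})
  (V_type0 : {in V, forall v, has_type e v 0}) (V_indep : independent e V)
  (V_dom : {in V, forall v, exists2 q, q \in Q & e q v})
  (V_nbr_dom : forall v w, v \in V -> has_type e w 0 -> e v w ->
     exists2 u, u \in Q :|: Z & e u w).

Definition free_leaves := [set l | leaf e l & [forall q in Q, ~~ e q l]].

Definition Q_leaves := [set l | leaf e l & [exists q in Q, e q l]].

Lemma in_Q_leaves l : (l \in Q_leaves) = leaf e l && [exists q in Q, e q l].
Proof. by rewrite in_set. Qed.

Lemma exchange_base_independent : independent e (Q :|: Z :|: free_leaves).
Proof.
have type0_nadj_leaf z l : z \in Z -> leaf e l -> ~~ e z l.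
  by move=> zZ ll; apply: contraL ll; apply: type0_nbr_internal (Z_type0 zZ).
apply/independentP => u w; rewrite !in_setU !in_set.
move=> /orP[/orP[uQ|uZ]|/andP[lu /forall_inP nQu]] /orP[/orP[wQ|wZ]|/andP[lw /forall_inP nQw]].
- by move/independentP: Q_indep; apply.
- exact: QZ_nadj.
- exact: nQw.
- by rewrite edge_sym; apply: QZ_nadj.
- by move/independentP: Z_indep; apply.
- exact: type0_nadj_leaf.
- by rewrite edge_sym; apply: nQu.
- by rewrite edge_sym; apply: type0_nadj_leaf.
- by apply: contraL lw; apply: leaf_nbr_internal lu.
Qed.

Section Exchange.
Variable S1 : {set T}.
Hypotheses (maxS1 : maximal_independent e S1)
  (baseS1 : Q :|: Z :|: free_leaves \subset S1).

Let iS1 : forall u w, u \in S1 -> w \in S1 -> ~~ e u w :=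
  elimT (independentP _) (maximal_independentW maxS1).

Lemma exchange_baseS1 u : u \in Q \/ u \in Z -> u \in S1.
Proof.
by move=> uQZ; apply: (subsetP baseS1); rewrite !in_setU; case: uQZ => ->; rewrite ?orbT.
Qed.

Lemma exchange_other_internal r :
  ~~ leaf e r -> ~~ has_type e r 0 -> r \notin Q -> r \notin S1.
Proof.
move=> ir r_type rQ; have [l rl ll] := internal_leaf_nbr ir r_type.
have lS1 : l \in S1.
  apply: (subsetP baseS1); rewrite in_setU; apply/orP; right; rewrite in_set ll.
  apply/forall_inP => q qQ; apply: contra rQ => ql.
  by rewrite -(leaf_nbr_uniq ll (edge_swap ql) (edge_swap rl)).
by apply: contraL rl => rS1; apply: iS1.
Qed.

Definition exchange := (S1 :\: Q) :|: Q_leaves :|: V.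

Lemma in_exchange u :
  (u \in exchange) = [|| (u \notin Q) && (u \in S1), u \in Q_leaves | u \in V].
Proof. by rewrite !in_setU in_setD orbA. Qed.

Lemma exchange_independent : independent e exchange.
Proof.
have S1_nadj_V u v : u \in S1 -> u \notin Q -> v \in V -> ~~ e u v.
  move=> uS1 uQ vV; apply/negP; rewrite edge_sym => vu.
  have iu := type0_nbr_internal (V_type0 vV) vu.
  have [u_type0|u_type] := boolP (has_type e u 0).
    have [w wQZ wu] := V_nbr_dom vV u_type0 vu.
    have wS1 : w \in S1 by apply: exchange_baseS1; move: wQZ; rewrite in_setU => /orP[]; auto.
    by move: (iS1 wS1 uS1); rewrite wu.
  by move: uS1; rewrite (negbTE (exchange_other_internal iu u_type uQ)).
have S1_nadj_Q_leaves u l : u \in S1 -> u \notin Q -> l \in Q_leaves -> ~~ e u l.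
  move=> uS1 uQ; rewrite in_Q_leaves => /andP[ll /exists_inP[q qQ ql]].
  apply: contra uQ => ul.
  by rewrite (leaf_nbr_uniq ll (edge_swap ul) (edge_swap ql)).
have leaf_nadj_V l v : leaf e l -> v \in V -> ~~ e l v.
  by move=> ll vV; apply: contraL ll => /edge_swap; apply: type0_nbr_internal (V_type0 vV).
apply/independentP => u w; rewrite !in_exchange.
move=> /or3P[/andP[uQ uS1]|uL|uV] /or3P[/andP[wQ wS1]|wL|wV].
- exact: iS1.
- exact: S1_nadj_Q_leaves.
- exact: S1_nadj_V.
- by rewrite edge_sym; apply: S1_nadj_Q_leaves.
- move: uL wL; rewrite !in_Q_leaves => /andP[lu _] /andP[lw _].
  by apply: contraL lw; apply: leaf_nbr_internal lu.
- by move: uL; rewrite in_Q_leaves => /andP[lu _]; apply: leaf_nadj_V.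
- by rewrite edge_sym; apply: S1_nadj_V.
- by move: wL; rewrite in_Q_leaves => /andP[lw _]; rewrite edge_sym; apply: leaf_nadj_V.
- by move/independentP: V_indep; apply.
Qed.

Lemma share_exchange_ge r : ~~ leaf e r ->
  share S1 r + (r \in Q :&: G_ e 2) + (r \in V) <= share exchange r.
Proof.
move=> ir; rewrite (share_maximal r maxS1) in_setI in_G.
have [rQ|rQ] /= := boolP (r \in Q).
  have [_ r_type] := Q_typed rQ.
  rewrite exchange_baseS1; last by left.
  rewrite (contraNF (@V_type0 r) r_type) addn0.
  have Lr : leaves_at r \subset exchange.
    apply/subsetP => l; rewrite in_leaves_at => /andP[rl ll].
    rewrite in_exchange in_Q_leaves ll /=; apply/orP; right; apply/orP; left.
    by apply/exists_inP; exists r.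
  apply: leq_trans (share_ge_leaves Lr); apply: leq_trans (leq_addl _ _); rewrite has_typeE ir.
  case: (type_cases r) => [lr|r_type0|/card_leaves_at->|/card_leaves_at->] //.
    by rewrite lr in ir.
  by rewrite r_type0 in r_type.
have [r_type0|r_type] := boolP (has_type e r 0).
  rewrite (card_leaves_at r_type0) /share; apply: leq_trans _ (leq_addr _ _).
  case: (boolP (r \in V)) => rV.
    have [q qQ qr] := V_dom rV.
    have -> : (r \in S1) = false.
      by apply: contraNF (iS1 (exchange_baseS1 (or_introl qQ))) _; rewrite qr.
    by rewrite in_exchange rV !orbT.
  by case: ifPn => // rS1; rewrite in_exchange rS1 rQ.
rewrite (negbTE (exchange_other_internal ir r_type rQ)) (contraNF (@V_type0 r) r_type) addn0.
have Lr : leaves_at r \subset exchange.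
  apply/subsetP => l lL.
  have lS1 := subsetP (maximal_leaves_at maxS1 (exchange_other_internal ir r_type rQ)) _ lL.
  move: lL; rewrite in_leaves_at => /andP[_ ll].
  by rewrite in_exchange lS1 andbT; apply/orP; left; apply: contraL ll => /Q_typed[].
by apply: leq_trans (share_ge_leaves Lr); rewrite addn0 leq_addl.
Qed.

Lemma card_exchange_ge : #|S1| + #|Q :&: G_ e 2| + #|V| <= #|exchange|.
Proof.
have QG_internal : {in Q :&: G_ e 2, forall r, ~~ leaf e r}.
  by move=> r; rewrite in_setI => /andP[/Q_typed[]].
have V_internal : {in V, forall r, ~~ leaf e r}.
  by move=> r /V_type0/has_type_internal.
rewrite (card_sum_share S1) (card_sum_share exchange).
rewrite -(sum_internal_indicator QG_internal) -(sum_internal_indicator V_internal).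
rewrite -!big_split /=.
by apply: leq_sum => r; apply: share_exchange_ge.
Qed.

End Exchange.

Lemma exchange_not_awc : 2 <= #|V| + #|Q :&: G_ e 2| -> ~ almost_well_covered e.
Proof.
move=> gap awc; have [S1 maxS1 baseS1] := independent_maximal_ext exchange_base_independent.
have := awc_card_le awc maxS1 (exchange_independent maxS1 baseS1).
rewrite leqNgt => /negP; apply; apply: leq_trans (card_exchange_ge maxS1 baseS1).
by rewrite -addn2 -addnA leq_add2l addnC.
Qed.

End ExchangeWitness.

Lemma G2_xy : G_ e 2 = [set x; y].
Proof.
apply/setP => v; rewrite in_G !inE; apply/idP/orP => [/type2_xy[]->|[]/eqP->//]; auto.
Qed.

Lemma awc_of_type0_bound :
  (forall S1 S2, maximal_independent e S1 -> independent e S2 ->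
     #|G_ e 0 :&: S2| + #|G_ e 2 :&: S1| <= #|G_ e 0 :&: S1| + 1) ->
  almost_well_covered e.
Proof.
move=> bound; have [S1 [S2 [maxS1 iS2 gap]]] := type2_exchange x_type2.
apply: (awc_of_card_le maxS1 iS2 gap) => {gap}{}S1 {}S2 {}maxS1 {}iS2.
rewrite -(leq_add2r #|G_ e 0 :&: S1|); apply: leq_trans (card_exchange_le maxS1 iS2) _.
by move: (bound _ _ maxS1 iS2); rewrite addn1 addSn -addnS -addnA leq_add2l.
Qed.

Lemma awc_of_type0_structure : e x y -> type0_shape -> almost_well_covered e.
Proof.
move=> exy P_cases; apply: awc_of_type0_bound => S1 S2 maxS1 iS2.
have G2_S1 : #|G_ e 2 :&: S1| <= 1.
  by rewrite G2_xy; apply: card_edge_independent exy (maximal_independentW maxS1).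
case: P_cases => [->|[a [b [[_ ab] P_ab [xa xb ya yb] [da db] [s [size_s [cyc _] xyab_s]]]]]].
  by rewrite !set0I cards0 !add0n.
have [aS bS xS yS] := xyab_s.
have P_S2 : #|G_ e 0 :&: S2| <= 1 by rewrite P_ab; apply: card_edge_independent.
have [a_type0 b_type0] : has_type e a 0 /\ has_type e b 0.
  by rewrite -!in_G P_ab !inE !eqxx orbT.
have [/set0Pn[v]|/negPn/eqP->] := boolP (G_ e 2 :&: S1 != set0); last first.
  by rewrite cards0 addn0 (leq_trans P_S2) ?leq_addl.
rewrite in_setI in_G => /andP[v_type2 vS1].
have ab_S1 : (a \in S1) || (b \in S1).
  apply: (maximal_cycle6_deg2_edge maxS1 cyc size_s aS bS _ ab da db vS1).
  - by case: (type2_xy v_type2) => ->.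
  - exact: has_type_neq v_type2 a_type0 _.
  - exact: has_type_neq v_type2 b_type0 _.
  - by case: (type2_xy v_type2) => ->.
  - by case: (type2_xy v_type2) => ->.
have : 0 < #|G_ e 0 :&: S1|.
  rewrite card_gt0; apply/set0Pn.
  by case/orP: ab_S1 => ?; [exists a|exists b]; rewrite in_setI in_G ?a_type0 ?b_type0.
by move=> P_S1; apply: leq_trans (leq_add P_S2 G2_S1) _; rewrite !addn1 ltnS.
Qed.

(** * Structure of almost well-covered graphs *)

Section AlmostWellCovered.
Hypothesis awc : almost_well_covered e.

Lemma type2_adj s t : has_type e s 2 -> has_type e t 2 -> s != t -> e s t.
Proof.
move=> s_type2 t_type2 st; apply: contraT => nst; exfalso.
apply: (@exchange_not_awc [set s; t] set0 set0 _ _ _ _ _ _ _ _ _ _ awc).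
- move=> q; rewrite !inE => /orP[] /eqP->.
    exact: has_type_pos s_type2 isT.
  exact: has_type_pos t_type2 isT.
- apply/independentP => u w; rewrite !inE.
  by case/orP=> /eqP-> /orP[] /eqP->; rewrite ?edge_irrefl // edge_sym.
all: try solve [exact: independent0 | by move=> ?; rewrite inE | by move=> ? ? _; rewrite inE
  | by move=> ? ?; rewrite inE].
- rewrite cards0 (setIidPl _) ?cards2 ?st //.
  by apply/subsetP => v; rewrite !inE => /orP[] /eqP->.
Qed.

Lemma exists_type2_nadj u : exists2 s, has_type e s 2 & ~~ e u s.
Proof.
have [ux|] := boolP (e u x); last by exists x.
exists y => //; apply/negP => uy.
by apply: (no_triangle ux (type2_adj x_type2 y_type2 x_neq_y)); rewrite edge_sym.
Qed.

Lemma exists_other_type2 s : has_type e s 2 -> exists2 t, has_type e t 2 & t != s.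
Proof.
by case/type2_xy=> ->; [exists y; rewrite // eq_sym|exists x].
Qed.

Section NearType0.
Variables s v : T.
Hypotheses (s_type2 : has_type e s 2) (v_type0 : has_type e v 0).

Definition around := [set u | ~~ e u s & near (G_ e 0) v u].

Lemma around_independent : independent e (s |: around).
Proof.
apply/independentP => u w; rewrite !inE.
move=> /predU1P[->|/andP[us nu]] /predU1P[->|/andP[ws nw]].
- by rewrite edge_irrefl.
- by rewrite edge_sym.
- exact: us.
- exact: near_nadj nu nw.
Qed.

Lemma type0_nbr_nbrs_adj :
  (e v s \/ exists2 u, has_type e u 1 & e v u && ~~ e u s) ->
  exists w, [/\ has_type e w 0, e v w, ~~ e w s & forall z, e w z -> z != v -> e z s].
Proof.
move=> v_dom.
pose good w := [&& has_type e w 0, e v w, ~~ e w s & [forall z, e w z ==> (z != v) ==> e z s]].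
case: (pickP good) => [w /and4P[w_type0 vw ws /forallP Nw]|bad].
  by exists w; split => // z wz zv; have := Nw z; rewrite wz zv.
(* Otherwise trading s and the type-1 vertices near v for their leaves and adding v,
   with the type-0 vertices near v kept in the maximal set, gains two vertices. *)
pose Q := s |: [set u in around | has_type e u 1].
pose Z := [set u in around | has_type e u 0].
have QZ_around : Q :|: Z \subset s |: around.
  by apply/subsetP => u; rewrite !inE => /orP[/orP[->|/andP[-> _]]|/andP[-> _]]; rewrite ?orbT.
have QZ_indep : independent e (Q :|: Z) := independentS QZ_around around_independent.
have near2 w u : has_type e w 0 -> e v w -> e w u -> u != v -> near (G_ e 0) v u.
  move=> w_type0 vw wu uv; apply/orP; right.
  by apply/exists_inP; exists w; rewrite ?in_G ?vw ?wu.
exfalso; apply: (@exchange_not_awc Q Z [set v] _ _ _ _ _ _ _ _ _ _ awc).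
- move=> q; rewrite !inE => /predU1P[->|/andP[_ q_type1]].
    exact: has_type_pos s_type2 isT.
  exact: has_type_pos q_type1 isT.
- exact: independentS (subsetUl _ _) QZ_indep.
- by move=> z; rewrite inE => /andP[].
- exact: independentS (subsetUr _ _) QZ_indep.
- by move=> q z qQ zZ; move/independentP: QZ_indep; apply; rewrite in_setU ?qQ ?zZ ?orbT.
- by move=> u; rewrite inE => /eqP->.
- by apply/independentP => u w; rewrite !inE => /eqP-> /eqP->; rewrite edge_irrefl.
- move=> v'; rewrite inE => /eqP->; case: v_dom => [vs|[u u_type1 /andP[vu us]]].
    by exists s; rewrite ?setU11 // edge_sym.
  exists u; last by rewrite edge_sym.
  rewrite !inE u_type1 us /= andbT /near vu in_G /=; apply/orP; right; apply/orP; left.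
  by apply/negP => /(has_type_uniq u_type1).
- move=> v' w; rewrite inE => /eqP-> w_type0 vw.
  have [ws|ws] := boolP (e w s); first by exists s; rewrite ?inE ?eqxx // edge_sym.
  have := bad w; rewrite /good w_type0 vw ws /= => /negbT/forallPn[z].
  rewrite !negb_imply => /and3P[wz zv zs].
  exists z; last by rewrite edge_sym.
  case: (type_cases z) => [lz|z_type0|z_type1|z_type2].
  - by move: (type0_nbr_internal w_type0 wz); rewrite lz.
  - by rewrite !inE z_type0 zs (near2 w) ?orbT.
  - by rewrite !inE z_type1 zs (near2 w) ?orbT.
  - have zs' : z != s by apply: contraNneq ws => <-.
    by rewrite (type2_adj z_type2 s_type2 zs') in zs.
- rewrite cards1 ltnS card_gt0; apply/set0Pn; exists s.
  by rewrite in_setI in_G s_type2 !inE eqxx.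
Qed.

End NearType0.

Lemma type0_type2_nadj v s : has_type e v 0 -> has_type e s 2 -> ~~ e v s.
Proof.
move=> v_type0 s_type2; apply/negP => vs.
have [w [w_type0 vw ws Nw]] := type0_nbr_nbrs_adj s_type2 v_type0 (or_introl vs).
have [p wp pv] := internal_other_nbr (has_type_internal w_type0) (edge_swap vw).
apply: (no_square (edge_swap vs) vw wp (Nw _ wp pv)).
  exact: has_type_neq s_type2 w_type0 _.
by rewrite eq_sym.
Qed.

Lemma type0_type1_path v u s : has_type e v 0 -> has_type e u 1 -> e v u ->
  has_type e s 2 -> ~~ e u s ->
  exists w p, [/\ has_type e w 0, e v w, has_type e p 1, e w p & e p s] /\
    forall z, e w z -> z = v \/ z = p.
Proof.
move=> v_type0 u_type1 vu s_type2 us.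
have u_dom : exists2 u, has_type e u 1 & e v u && ~~ e u s.
  by exists u; rewrite ?vu.
have [w [w_type0 vw ws Nw]] := type0_nbr_nbrs_adj s_type2 v_type0 (or_intror u_dom).
have [p wp pv] := internal_other_nbr (has_type_internal w_type0) (edge_swap vw).
have ps := Nw _ wp pv.
have p_type1 : has_type e p 1.
  case: (type_cases p) => [lp|p_type0|//|p_type2].
  - by move: (type0_nbr_internal w_type0 wp); rewrite lp.
  - by move: (type0_type2_nadj p_type0 s_type2); rewrite ps.
  - by move: (type0_type2_nadj w_type0 p_type2); rewrite wp.
exists w, p; split => // z wz; have [->|zv] := eqVneq z v; first by left.
right; apply/eqP; apply: contraT => zp.
have ws' := has_type_neq w_type0 s_type2 isT.
by case: (no_square wz (Nw _ wz zv) (edge_swap ps) (edge_swap wp) ws' zp).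
Qed.

Lemma type0_type1_structure v u s : has_type e v 0 -> has_type e u 1 -> e v u ->
  has_type e s 2 -> ~~ e u s ->
  exists w p t, [/\ [/\ has_type e w 0, e v w, has_type e p 1, e w p & e p s],
    has_type e t 2 /\ t != s, e u t,
    forall z, e w z -> z = v \/ z = p & forall z, e v z -> z = w \/ z = u].
Proof.
move=> v_type0 u_type1 vu s_type2 us.
have [w [p [[w_type0 vw p_type1 wp ps] Nw]]] := type0_type1_path v_type0 u_type1 vu s_type2 us.
have [t t_type2 ts] := exists_other_type2 s_type2.
have pt : ~~ e p t.
  apply/negP => pt; apply: (no_triangle ps (type2_adj s_type2 t_type2 _) (edge_swap pt)).
  by rewrite eq_sym.
have [w' [p' [[w'_type0 ww' p'_type1 _ p't] Nw']]] :=
  type0_type1_path w_type0 p_type1 wp t_type2 pt.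
have eq_w' : w' = v.
  by case: (Nw _ ww') => // eq_w'; move: w'_type0; rewrite eq_w' => /(has_type_uniq p_type1).
subst w'; have eq_p' : p' = u.
  by case: (Nw' _ vu) => // eq_u; move: u_type1; rewrite eq_u => /(has_type_uniq w_type0).
subst p'; exists w, p, t; split => //.
Qed.

Lemma type1_nbr_type2 q v : has_type e q 1 -> has_type e v 0 -> e q v ->
  exists2 t, has_type e t 2 & e q t.
Proof.
move=> q_type1 v_type0 qv; have [s s_type2 qs] := exists_type2_nadj q.
have [w [p [t [_ [t_type2 _] qt _ _]]]] :=
  type0_type1_structure v_type0 q_type1 (edge_swap qv) s_type2 qs.
by exists t.
Qed.

Lemma type0_has_type1_nbr v : has_type e v 0 -> exists2 u, has_type e u 1 & e v u.
Proof.
move=> v_type0; apply/exists_inP; apply: contraT => /exists_inPn no_type1.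
(* The type-0 vertices without type-1 neighbours form a union of components of G,
   which cannot contain x. *)
pose A := [set z | has_type e z 0 & [forall u, has_type e u 1 ==> ~~ e z u]].
have A_nbr a b : a \in A -> e a b -> b \in A.
  rewrite !inE => /andP[a_type0 /forallP a_no1] ab.
  have b_type0 : has_type e b 0.
    case: (type_cases b) => [lb|//|b_type1|b_type2].
    - by move: (type0_nbr_internal a_type0 ab); rewrite lb.
    - by move: (a_no1 b); rewrite b_type1 ab.
    - by move: (type0_type2_nadj a_type0 b_type2); rewrite ab.
  rewrite b_type0; apply/forallP => u; apply/implyP => u_type1; apply/negP => bu.
  have [s s_type2 us] := exists_type2_nadj u.
  have [w [p [t [[_ _ p_type1 wp _] _ _ _ Nb]]]] :=
    type0_type1_structure b_type0 u_type1 bu s_type2 us.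
  case: (Nb a (edge_swap ab)) => eq_a; subst a.
    by move: (a_no1 p); rewrite p_type1 wp.
  by move: (has_type_uniq u_type1 a_type0).
have A_closed : closed e (mem A).
  by move=> a b ab; apply/idP/idP => [aA|bA]; [apply: A_nbr aA ab|apply: A_nbr bA (edge_swap ab)].
have vA : v \in A.
  by rewrite inE v_type0; apply/forallP => u; apply/implyP => u_type1; rewrite no_type1.
have := closed_connect A_closed (e_connected v x); rewrite vA inE => /esym/andP[x_type0 _].
by move: (has_type_uniq x_type2 x_type0).
Qed.

Definition attached_type1 := [set q | has_type e q 1 & [exists v, has_type e v 0 && e q v]].

Lemma attached_type1_independent : independent e attached_type1.
Proof.
apply/independentP => q q'; rewrite !inE.
move=> /andP[q_type1 /existsP[v /andP[v_type0 qv]]].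
move=> /andP[q'_type1 /existsP[v' /andP[v'_type0 q'v']]].
apply/negP => qq'.
have [h h_type2 qh] := type1_nbr_type2 q_type1 v_type0 qv.
have [h' h'_type2 q'h'] := type1_nbr_type2 q'_type1 v'_type0 q'v'.
have [eq_h|hh'] := eqVneq h h'.
  by subst h'; apply: (no_triangle qq' q'h'); rewrite edge_sym.
have h'h : e h' h by apply: type2_adj; rewrite // eq_sym.
apply: (no_square qq' q'h' h'h (edge_swap qh)).
  exact: has_type_neq q_type1 h'_type2 _.
exact: has_type_neq q'_type1 h_type2 _.
Qed.

Lemma type0_at_most_pair a b u : has_type e a 0 -> has_type e b 0 -> e a b ->
  has_type e u 1 -> e a u -> (forall z, e a z -> z = b \/ z = u) ->
  G_ e 0 = [set a; b].
Proof.
move=> a_type0 b_type0 ab u_type1 au Na.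
apply/setP => z; rewrite in_G !inE; apply/idP/idP; last by case/orP=> /eqP->.
move=> z_type0; apply: contraT => /norP[za zb].
have type1_nbr w : has_type e w 0 -> exists2 q, q \in attached_type1 & e q w.
  move=> w_type0; have [q q_type1 wq] := type0_has_type1_nbr w_type0.
  exists q; rewrite ?inE ?q_type1 /= 1?edge_sym //.
  by apply/existsP; exists w; rewrite w_type0 edge_sym.
exfalso; apply: (@exchange_not_awc attached_type1 set0 [set a; z] _ _ _ _ _ _ _ _ _ _ awc).
all: try solve [exact: independent0 | by move=> ?; rewrite inE | by move=> ? ? _; rewrite inE].
- by move=> q; rewrite inE => /andP[q_type1 _]; apply: has_type_pos q_type1 isT.
- exact: attached_type1_independent.
- by move=> v; rewrite !inE => /orP[] /eqP->.
- apply/independentP => v w; rewrite !inE.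
  have az : ~~ e a z.
    apply/negP => /Na[/eqP|eq_z]; first by rewrite (negbTE zb).
    by move: z_type0; rewrite eq_z => /(has_type_uniq u_type1).
  by case/orP=> /eqP-> /orP[] /eqP->; rewrite ?edge_irrefl // edge_sym.
- by move=> v; rewrite !inE => /orP[] /eqP-> //; apply: type1_nbr.
- move=> v w _ w_type0 _; have [q qQ qw] := type1_nbr w w_type0.
  by exists q; rewrite ?in_setU ?qQ.
- by rewrite cards2 eq_sym za.
Qed.

Lemma awc_type0_structure : e x y /\ type0_shape.
Proof.
split; first exact: type2_adj x_type2 y_type2 x_neq_y.
have [P0|[a]] := set_0Vmem (G_ e 0); [by left|rewrite in_G => a_type0; right].
have [u u_type1 au] := type0_has_type1_nbr a_type0.
have [s s_type2 us] := exists_type2_nadj u.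
have [b [p [t [[b_type0 ab p_type1 bp ps] [t_type2 ts] ut Nb Na]]]] :=
  type0_type1_structure a_type0 u_type1 au s_type2 us.
have st_neq : s != t by rewrite eq_sym.
have st : e s t := type2_adj s_type2 t_type2 st_neq.
have up : u != p.
  by apply: contraTneq ut => ->; apply/negP => /edge_swap; apply: no_triangle ps st.
have xy_st v : has_type e v 2 -> v \in [:: u; a; b; p; s; t].
  by case/(type2_cases s_type2 t_type2 st_neq) => ->; rewrite !inE eqxx !orbT.
have uniq6 : uniq [:: u; a; b; p; s; t].
  rewrite /= !inE !negb_or up (edge_neq ab) st_neq.
  by repeat (apply/andP; split);
    first [done | eapply has_type_neq; [eassumption|eassumption|done]].
exists a, b; split.
- by rewrite (edge_neq ab).
- exact: type0_at_most_pair a_type0 b_type0 ab u_type1 au Na.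
- by split; rewrite edge_sym; apply: type0_type2_nadj.
- split; first exact: deg_eq2 (has_type_neq b_type0 u_type1 _) ab au Na.
  exact: deg_eq2 (has_type_neq a_type0 p_type1 _) (edge_swap ab) bp Nb.
exists [:: u; a; b; p; s; t]; split => //.
  by apply: cycle6_induced; rewrite // edge_sym.
by split; [rewrite !inE eqxx !orbT|rewrite !inE eqxx !orbT|apply: xy_st|apply: xy_st].
Qed.

End AlmostWellCovered.

End TypedVertices.
End Girth6.
End SimpleGraph.

Theorem theorem14 (T : finType) (e : rel T) (x y : T) :
  simple_graph e -> connected_graph e -> girth_at_least e 6 ->
  x != y -> has_type e x 2 -> has_type e y 2 ->
  (forall v : T, has_type e v 2 -> v = x \/ v = y) ->
  (forall (v : T) (k : nat), 3 <= k -> ~~ has_type e v k) ->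
  (almost_well_covered e <->
   e x y /\
   (G_ e 0 = set0 \/
    exists a b : T,
      [/\ a != b /\ e a b, G_ e 0 = [set a; b],
          [/\ ~~ e x a, ~~ e x b, ~~ e y a & ~~ e y b],
          (deg e a = 2 /\ deg e b = 2) &
          exists s : seq T,
            [/\ size s = 6, induced_cycle e s &
                [/\ a \in s, b \in s, x \in s & y \in s]]])).
Proof.
move=> e_simple e_connected girth6 x_neq_y x_type2 y_type2 type2_xy no_type3.
split => [awc|[exy structure]].
  exact: awc_type0_structure.
exact: awc_of_type0_structure structure.
Qed.
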